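(* For every $i\in\{1,\ldots,s\}$ and every non-negative integer $r$, $$\boldsymbol{\beta}_G\circ\gamma_i^r=\gamma_i^{r+1}\circ\beta_{G_i}.$$
   Context: Let $G$ be a finite group, $p$ a prime dividing $|G|$, and $\mathbb{F}_p$ the field with $p$ elements. $G$ acts on $\mathbb{F}_pG$ and on $\mathbb{Z}/p^2[G]$ by conjugation. Let $\boldsymbol{\beta}_G:\mathrm{H}^r(G,\mathbb{F}_pG)\to\mathrm{H}^{r+1}(G,\mathbb{F}_pG)$ be the connecting homomorphism of the short exact sequence of $\mathbb{Z}G$-modules $0\to\mathbb{F}_pG\to\mathbb{Z}/p^2[G]\to\mathbb{F}_pG\to0$, where the first map sends $\widehat a g\mapsto\overline{pa}g$ and the second is reduction mod $p$ of the coefficients. For a subgroup $H$, $\beta_H:\mathrm{H}^r(H,\mathbb{F}_p)\to\mathrm{H}^{r+1}(H,\mathbb{F}_p)$ is the usual Bockstein homomorphism of group cohomology (connecting map of $0\to\mathbb{F}_p\to\mathbb{Z}/p^2\to\mathbb{F}_p\to0$). Let $g_1=1,g_2,\ldots,g_s$ be representatives of the conjugacy classes of $G$ and $G_i=C_G(g_i)$. Let $\theta_{g_i}:\mathbb{F}_p\to\mathbb{F}_pG$, $\lambda\mapsto\lambda g_i$ (a $\mathbb{F}_pG_i$-module map), and $\gamma_i:=\mathrm{tr}_{G_i}^G\circ\theta_{g_i}^*:\mathrm{H}^*(G_i,\mathbb{F}_p)\to\mathrm{H}^*(G,\mathbb{F}_pG)$; $\gamma_i^r$ denotes its component in degree $r$.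 *)

From HB Require Import structures.
From mathcomp Require Import all_boot all_order all_algebra all_fingroup.
Set Implicit Arguments. Unset Strict Implicit. Unset Printing Implicit Defensive.
Import GRing.Theory.
Local Open Scope ring_scope.
Local Open Scope group_scope.

(* A cochain with n arguments (degree n-1) on gT with values in M: a function
   on (n)-tuples of group elements.  Homogeneous convention:
   C^r(H,M) = Hom_H(Z[H^{r+1}], M), H acting diagonally on the left. *)

Definition on_set (gT : finGroupType) (H : {set gT}) (n : nat) (x : 'I_n -> gT) :=
  forall k, x k \in H.

Definition equivariant (gT : finGroupType) (M : Type) (H : {set gT})
  (act : gT -> M -> M) (n : nat) (f : ('I_n -> gT) -> M) :=
  forall (h : gT) (x : 'I_n -> gT), h \in H -> on_set H x ->
    f (fun k => (h * x k)%g) = act h (f x).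

Definition cobound (gT : finGroupType) (M : zmodType) (n : nat)
  (f : ('I_n -> gT) -> M) : ('I_n.+1 -> gT) -> M :=
  fun x => (\sum_(j < n.+1)
             (if odd j then - f (fun k => x (lift j k)) else f (fun k => x (lift j k))))%R.

Definition is_cocycle (gT : finGroupType) (M : zmodType) (H : {set gT})
  (n : nat) (f : ('I_n -> gT) -> M) :=
  forall x : 'I_n.+1 -> gT, on_set H x -> cobound f x = 0%R.

Definition is_coboundary (gT : finGroupType) (M : zmodType) (H : {set gT})
  (act : gT -> M -> M) (n : nat) (f : ('I_n.+2 -> gT) -> M) :=
  exists e : ('I_n.+1 -> gT) -> M,
    equivariant H act e /\ forall x, on_set H x -> f x = cobound e x.

Definition triv_act (gT : finGroupType) (M : Type) : gT -> M -> M := fun _ m => m.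

(* conjugation action on R[G] = {ffun gT -> R}, a = sum_y a(y) y:
   g . a = sum_y a(y) g y g^-1, whose coefficient at z is a(g^-1 z g) = a(z ^ g). *)
Definition conj_act (gT : finGroupType) (R : Type) (g : gT) (a : {ffun gT -> R})
  : {ffun gT -> R} := [ffun z => a (z ^ g)].

(* set-theoretic lift F_p -> Z/p^2 (representative in {0,..,p-1}) and
   the inverse of the injection Z/p^2 >-> ... i.e. (p a mod p^2) |-> a mod p *)
Definition liftp (p : nat) (a : 'F_p) : 'Z_(p ^ 2) := ((nat_of_ord a)%:R)%R.
Definition unp (p : nat) (v : 'Z_(p ^ 2)) : 'F_p := (((nat_of_ord v) %/ p)%N%:R)%R.

(* Bockstein beta_H on cochains with trivial F_p coefficients:
   connecting map of 0 -> F_p -> Z/p^2 -> F_p -> 0 (lift, cobound, divide by p). *)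
Definition bock_triv (gT : finGroupType) (p : nat) (n : nat)
  (c : ('I_n -> gT) -> 'F_p) : ('I_n.+1 -> gT) -> 'F_p :=
  fun x => unp (cobound (fun y => liftp (c y)) x).

(* boldface Bockstein beta_G on cochains with coefficients F_pG:
   connecting map of 0 -> F_pG -> Z/p^2[G] -> F_pG -> 0, coefficientwise. *)
Definition bock_grp (gT : finGroupType) (p : nat) (n : nat)
  (c : ('I_n -> gT) -> {ffun gT -> 'F_p}) : ('I_n.+1 -> gT) -> {ffun gT -> 'F_p} :=
  fun x => [ffun z => unp (cobound (fun y => [ffun w => liftp (c y w)]) x z)].

Definition theta (gT : finGroupType) (p : nat) (g : gT) (l : 'F_p) : {ffun gT -> 'F_p} :=
  [ffun z => if z == g then l else 0%R].

(* Transfer (corestriction) tr_H^G, G = [set: gT], on cochains: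
   an H-cochain f (on H^n) is first transported to G^n along the chain map
   x |-> x rho(x)^-1 (rho = chosen right-coset representative, so x rho(x)^-1 \in H),
   then tr f (x) = sum_{Ht in H\G} t^-1 . f(t x). *)
Definition transfer (gT : finGroupType) (M : zmodType) (H : {group gT})
  (act : gT -> M -> M) (n : nat) (f : ('I_n -> gT) -> M) : ('I_n -> gT) -> M :=
  fun x => (\sum_(C in rcosets H [set: gT])
     act ((repr C)^-1)%g
       (f (fun k => ((repr C * x k) * (repr (H :* (repr C * x k)))^-1)%g)))%R.

Definition gamma (gT : finGroupType) (p : nat) (g : gT) (n : nat)
  (c : ('I_n -> gT) -> 'F_p) : ('I_n -> gT) -> {ffun gT -> 'F_p} :=
  transfer 'C[g]%G (@conj_act gT 'F_p) (fun x => theta g (c x)).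

From HB Require Import structures.
From mathcomp Require Import all_boot all_order all_algebra all_fingroup.
Import GRing.Theory.
Set Implicit Arguments. Unset Strict Implicit.

(* Both Bocksteins are computed coefficientwise, and the z-coefficient of
   gamma_g d is either identically 0 or d precomposed with the coordinatewise
   map a |-> t a repr(C_G(g) t a)^-1, for the coset representative t with
   z = g ^ t, which is unique since g ^ t determines the coset C_G(g) t.
   Coboundaries commute with such precompositions, so
   beta_G o gamma = gamma o beta_{C_G(g)} holds already on cochains: the
   difference is the coboundary of the zero cochain. *)

Local Open Scope group_scope.

Section Cochains.
Variable gT : finGroupType.

Lemma cobound0 (M : zmodType) n (x : 'I_n.+1 -> gT) :
  cobound (fun _ : 'I_n -> gT => 0 : M)%R x = 0%R.
Proof. by rewrite /cobound big1 // => j _; case: (odd j); rewrite ?oppr0. Qed.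

Lemma cobound_ffun (M : zmodType) n (F : ('I_n -> gT) -> gT -> M) x z :
  cobound (fun y => [ffun w => F y w]) x z = cobound (F^~ z) x.
Proof.
rewrite /cobound sum_ffunE; apply: eq_bigr => j _.
by case: (odd j); rewrite ?ffunE.
Qed.

Variable p : nat.

Lemma eq_bock_triv n (c1 c2 : ('I_n -> gT) -> 'F_p) :
  c1 =1 c2 -> bock_triv c1 =1 bock_triv c2.
Proof.
move=> eq_c x; congr unp; apply: eq_bigr => j _.
by rewrite !eq_c.
Qed.

Lemma bock_triv0 n (x : 'I_n.+1 -> gT) :
  bock_triv (fun _ : 'I_n -> gT => 0 : 'F_p)%R x = 0%R.
Proof. by rewrite /bock_triv cobound0 /unp div0n. Qed.

Lemma bock_triv_comp n (c : ('I_n -> gT) -> 'F_p) (f : gT -> gT) x :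
  bock_triv (fun y => c (fun k => f (y k))) x = bock_triv c (fun k => f (x k)).
Proof. by []. Qed.

Lemma bock_grpE n (F : ('I_n -> gT) -> {ffun gT -> 'F_p}) x z :
  bock_grp F x z = bock_triv (F^~ z) x.
Proof. by rewrite ffunE cobound_ffun. Qed.

End Cochains.

Section Transfer.
Variable gT : finGroupType.

Definition coset_shift (H : {group gT}) (t a : gT) : gT :=
  (t * a) * (repr (H :* (t * a)))^-1.

Lemma rcoset_cent1_eq (g x y : gT) :
  ('C[g] :* x == 'C[g] :* y) = (g ^ x == g ^ y).
Proof.
have fixE u : (g ^ u == g) = (u \in 'C[g]).
  by rewrite conjg_fix commg1_sym; apply/commgP/cent1P.
apply/eqP/eqP => [/rcoset_eqP | eq_gxy].
  by rewrite mem_rcoset -fixE conjgM => /eqP/(canRL (conjgKV y)).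
by apply/rcoset_eqP; rewrite mem_rcoset -fixE conjgM eq_gxy conjgK.
Qed.

Lemma rcosets_cent1_conj_inj (g : gT) :
  {in rcosets 'C[g] [set: gT] &, injective (fun C => g ^ repr C)}.
Proof.
move=> C C0 /rcosetsP[x _ ->] /rcosetsP[y _ ->] /eqP.
by rewrite -rcoset_cent1_eq !rcoset_repr => /eqP.
Qed.

Lemma gamma_coef (p : nat) (g z : gT) :
  (exists t, forall n (d : ('I_n -> gT) -> 'F_p) y,
     gamma g d y z = d (fun k => coset_shift 'C[g] t (y k)))
  \/ (forall n (d : ('I_n -> gT) -> 'F_p) y, gamma g d y z = 0%R).
Proof.
have hitE C : (z ^ (repr C)^-1 == g) = (g ^ repr C == z).
  by rewrite (canF_eq (conjgKV _)) eq_sym.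
pose hit C := (C \in rcosets 'C[g] [set: gT]) && (g ^ repr C == z).
case: (pickP hit) => [C0 /andP[cosC0 hitC0] | none].
  left; exists (repr C0) => n d y.
  rewrite /gamma /transfer sum_ffunE (bigD1 C0) //= big1 ?addr0.
    by rewrite !ffunE hitE hitC0.
  move=> C /andP[cosC neC]; rewrite !ffunE hitE; case: eqP => // hitC.
  have eq_conj : g ^ repr C = g ^ repr C0 by rewrite hitC (eqP hitC0).
  by rewrite (rcosets_cent1_conj_inj cosC cosC0 eq_conj) eqxx in neC.
right=> n d y; rewrite /gamma /transfer sum_ffunE big1 // => C cosC.
by rewrite !ffunE hitE; have := none C; rewrite /hit cosC /= => ->.
Qed.

Lemma bock_grp_gamma (p : nat) (g : gT) n (c : ('I_n -> gT) -> 'F_p) x :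
  bock_grp (gamma g c) x = gamma g (bock_triv c) x.
Proof.
apply/ffunP=> z; rewrite bock_grpE.
have [[t coefE] | coefE] := gamma_coef p g z.
  by rewrite (eq_bock_triv (coefE n c)) bock_triv_comp coefE.
by rewrite (eq_bock_triv (coefE n c)) bock_triv0 coefE.
Qed.

End Transfer.

Theorem lemma2p3 (gT : finGroupType) (p : nat) (g : gT) (r : nat)
  (hp : prime p) (hpG : p %| #|[set: gT]|)
  (c : ('I_r.+1 -> gT) -> 'F_p)
  (hceq : equivariant 'C[g]%g (@triv_act gT 'F_p) c)
  (hcoc : is_cocycle 'C[g]%g c) :
  is_coboundary [set: gT] (@conj_act gT 'F_p)
    (fun x => (bock_grp (gamma g c) x - gamma g (bock_triv c) x)%R).
Proof.
exists (fun _ => 0%R); split.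
  by move=> h x _ _; apply/ffunP => w; rewrite !ffunE.
by move=> x _; rewrite cobound0 bock_grp_gamma subrr.
Qed.
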